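(* Let $\mathbb{Z}[a,b]$ carry the $\lambda$-ring structure $\Lambda_1\otimes\Lambda_{-1}$, i.e. $a$ is a line element and $b$ satisfies $\lambda^n(b)=b^n$ for all $n$, and let $x=a+b$. Then the $\lambda$-ring homomorphism $\Lambda\to\mathbb{Z}[a,b]$ sending $e_1$ to $x$ has kernel $I_{(2,2)}$ and image $\mathbb{Z}+x\,\mathbb{Z}[a,b]$; thus $\Lambda_{(2,2)}=\Lambda/I_{(2,2)}\cong\mathbb{Z}+x\mathbb{Z}[a,b]$, and in it $\lambda^{n+1}(x)=xb^n$ for all $n\ge0$.
   Context: $\lambda$-rings are special $\lambda$-rings. $\Lambda=\mathbb{Z}[e_1,e_2,\dots]$ is the ring of symmetric functions, the free $\lambda$-ring on $e_1$ with $\lambda^n(e_1)=e_n$, with Schur function basis $s_\pi$. $I_{(2,2)}$ is the subgroup (ideal) of $\Lambda$ spanned by the $s_\pi$ for partitions $\pi$ whose Young diagram contains that of $(2,2)$, i.e. $\pi_1\ge2$ and $\pi_2\ge2$. A line element is an element $\ell$ with $\lambda^n(\ell)=0$ for $n>1$. *)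

From HB Require Import structures.
From mathcomp Require Import all_boot all_order all_algebra all_fingroup.
Set Implicit Arguments. Unset Strict Implicit. Unset Printing Implicit Defensive.
Import Order.TTheory GRing.Theory Num.Theory.
Local Open Scope ring_scope.

(* Z[a,b] is {poly {poly int}}: outer variable b, inner variable a.    *)
Definition Rab := {poly {poly int}}.
Definition bZ : Rab := 'X.
Definition aZ : Rab := ('X : {poly int})%:P.
Definition xZ : Rab := aZ + bZ.

(* Truncated (mod t^(n+1)) power series (1 + m t)^c, c an integer.     *)
Definition lfac (n : nat) (m : Rab) (c : int) : {poly Rab} :=
  match c with
  | Posz k => (1 + m *: 'X) ^+ k
  | Negz k => (\sum_(k0 < n.+1) (- m) ^+ k0 *: 'X^k0) ^+ k.+1
  end.

(* Write p = sum c_ij a^i b^j.  Here a and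
   -b are line elements, hence so is every a^i (-b)^j, and
   a^i b^j = (-1)^j a^i (-b)^j; thus
   lambda_t(p) = prod_ij (1 + a^i (-b)^j t)^((-1)^j c_ij).
   This is the (special) lambda-ring structure Lambda_1 (x) Lambda_{-1}:
   a is a line element and lambda_t(b) = 1/(1 - b t), i.e. lambda^n b = b^n. *)
Definition lam_t (n : nat) (p : Rab) : {poly Rab} :=
  \prod_(j < size p) \prod_(i < size p`_j)
     lfac n (aZ ^+ i * (- bZ) ^+ j) ((-1) ^+ j * p`_j`_i).

Definition lamR (n : nat) (p : Rab) : Rab := (lam_t n p)`_n.

(* The ring of symmetric functions Lambda = Z[e_1, e_2, ...].          *)
(* An element is represented by a formal finite Z-linear combination   *)
(* of e-monomials e_{k_1} ... e_{k_r} (a monomial is a seq nat of      *)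
(* indices; e_0 = 1).  Two representatives denote the same element of  *)
(* Lambda iff they have the same coefficient on every monomial         *)
(* e_mu (mu a partition, i.e. normalised monomial).                    *)
Definition Lam := seq (seq nat * int).

Definition nmon (m : seq nat) : seq nat := sort geq (filter (fun k => 0 < k)%N m).

Definition coefL (f : Lam) (mu : seq nat) : int :=
  \sum_(t <- f | nmon t.1 == mu) t.2.

Definition lam_eq (f g : Lam) : Prop := forall mu, coefL f mu = coefL g mu.

Definition is_partition (p : seq nat) : bool :=
  sorted geq p && all (fun k => 0 < k)%N p.

Definition contains22 (p : seq nat) : bool :=
  (2 <= nth 0 p 0)%N && (2 <= nth 0 p 1)%N.

Definition conjp (p : seq nat) : seq nat :=
  [seq count (fun q => i < q)%N p | i <- iota 0 (head 0%N p)].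

(* Schur function via the dual Jacobi-Trudi identity:
   s_p = det( e_{p'_i - i + j} )_{1 <= i,j <= l(p')},
   with e_0 = 1 and e_k = 0 for k < 0 (0-based indices below). *)
Definition jt_idx (c : seq nat) (i j : nat) : int :=
  (nth 0%N c i)%:Z - i%:Z + j%:Z.

Definition schur (p : seq nat) : Lam :=
  let c := conjp p in
  let l := size c in
  [seq ([seq absz (jt_idx c i (s i)) | i : 'I_l <- enum 'I_l],
        ((-1) ^+ odd_perm s : int))
  | s : {perm 'I_l} <- enum [set: {perm 'I_l}]
  & all (fun i : 'I_l => 0 <= jt_idx c i (s i)) (enum 'I_l)].

Definition lam_comb (cs : seq (seq nat * int)) : Lam :=
  flatten [seq [seq (t.1, pc.2 * t.2) | t <- schur pc.1] | pc <- cs].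

Definition in_I22 (f : Lam) : Prop :=
  exists cs : seq (seq nat * int),
    all (fun pc => is_partition pc.1 && contains22 pc.1) cs /\ lam_eq f (lam_comb cs).

(* The lambda-ring homomorphism Lambda -> Z[a,b] with e_1 |-> x:
   as a ring homomorphism it is determined by e_n |-> lambda^n(x). *)
Definition phi (f : Lam) : Rab :=
  \sum_(t <- f) t.2%:~R * \prod_(k <- t.1) lamR k xZ.

From HB Require Import structures.
From mathcomp Require Import all_boot all_order all_algebra all_fingroup.
From mathcomp Require Import ring zify.
Set Implicit Arguments. Unset Strict Implicit. Unset Printing Implicit Defensive.
Import Order.TTheory GRing.Theory Num.Theory.
Local Open Scope ring_scope.

(* The image of [phi] is a subring containing [Z] and [lambda^(j+1) x = x b^j]; since
   [x a = x x - x b] it contains every [x a^i b^j], hence all of [Z + x Z[a,b]].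

   For the kernel: [lambda^k x = x b^(k-1)] for [k >= 1], so when [p] contains (2,2) the first
   two rows of the dual Jacobi-Trudi matrix of [s_p] are proportional and [phi s_p = 0].
   Conversely, if [mu] is not a hook then [mu'] contains (2,2), and the Jacobi-Trudi
   expansion of [s_(mu')] writes [e_mu] modulo [I_(2,2)] as e-monomials of the same degree
   whose sum of squared parts is larger (rearrangement inequality).  By induction every
   element is, modulo [I_(2,2)], a combination of hooks [e_(m,1^(l-1))], which [phi] sends to
   [x^l b^(m-1)]; substituting [a - b] for [a] turns these into the distinct monomials
   [a^l b^(m-1)], so such a combination lies in the kernel only if it is zero. *)

(** * The lambda-powers of x and the image of phi *)

Lemma polyseq_xZ : polyseq xZ = [:: 'X; 1].
Proof. by rewrite /xZ /aZ /bZ addrC polyseqXaddC. Qed.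

Lemma lam_t_xZ n : lam_t n xZ = (1 + aZ *: 'X) * \poly_(k < n.+1) (bZ ^+ k).
Proof.
rewrite /lam_t polyseq_xZ /= !big_ord_recl !big_ord0 /= polyseqX polyseq1 /=.
rewrite !big_ord_recl !big_ord0 /= /bump /= !expr0 !expr1 !mulr1 !mul1r.
by rewrite opprK poly_def.
Qed.

Definition lam_x (k : nat) : Rab := lamR k xZ.

Lemma lam_x0 : lam_x 0 = 1.
Proof.
rewrite /lam_x /lamR lam_t_xZ mulrDl mul1r coefD -scalerAl coefZ coefXM /=.
by rewrite coef_poly /= mulr0 addr0 expr0.
Qed.

Lemma lam_xS n : lam_x n.+1 = xZ * bZ ^+ n.
Proof.
rewrite /lam_x /lamR lam_t_xZ mulrDl mul1r coefD -scalerAl coefZ coefXM /=.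
by rewrite !coef_poly ltnSn ltnW // exprS /xZ mulrDl addrC.
Qed.

Lemma Rab_expansion (q : Rab) :
  q = \sum_(j < size q) \sum_(i < size q`_j) (q`_j`_i)%:~R * (aZ ^+ i * bZ ^+ j).
Proof.
rewrite -[q in LHS]coefK poly_def; apply: eq_bigr => j _.
rewrite -mul_polyC -[q`_j in LHS]coefK poly_def rmorph_sum mulr_suml.
apply: eq_bigr => i _.
by rewrite -mul_polyC rmorphM rmorphXn mulrA /aZ /bZ -[q`_j`_i in LHS]intz !rmorph_int.
Qed.

Definition phi_mon (m : seq nat) : Rab := \prod_(k <- m) lam_x k.

Lemma phiE f : phi f = \sum_(t <- f) t.2%:~R * phi_mon t.1.
Proof. by []. Qed.

Lemma perm_nmon m : perm_eq (nmon m) (filter (fun k => 0 < k)%N m).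
Proof. by rewrite /nmon perm_sort. Qed.

Lemma phi_mon_nmon m : phi_mon (nmon m) = phi_mon m.
Proof.
rewrite /phi_mon (perm_big _ (perm_nmon m)) big_filter.
rewrite [RHS](bigID (fun k => 0 < k)%N) /= [X in _ = _ * X]big1 ?mulr1 //.
by move=> [|k] //= _; rewrite lam_x0.
Qed.

Lemma geq_trans : transitive geq.
Proof. by move=> x y z /= h1 h2; exact: leq_trans h2 h1. Qed.

Lemma nmon_partition m : is_partition (nmon m).
Proof.
rewrite /is_partition /nmon sort_sorted /=; last by move=> x y; exact: leq_total.
by rewrite all_sort; apply/allP => k; rewrite mem_filter => /andP[].
Qed.

Lemma nmon_id mu : is_partition mu -> nmon mu = mu.
Proof. by case/andP => Hs Ha; rewrite /nmon (all_filterP Ha) sorted_sort //; apply: geq_trans. Qed.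

Lemma nmonK m : nmon (nmon m) = nmon m.
Proof. exact/nmon_id/nmon_partition. Qed.

Definition scaleL (c : int) (f : Lam) : Lam := [seq (t.1, c * t.2) | t <- f].

Definition mulL (f g : Lam) : Lam := [seq (t.1 ++ u.1, t.2 * u.2) | t <- f, u <- g].

Lemma coefL_nil mu : coefL [::] mu = 0.
Proof. by rewrite /coefL big_nil. Qed.

Lemma coefL_cat f g mu : coefL (f ++ g) mu = coefL f mu + coefL g mu.
Proof. by rewrite /coefL big_cat. Qed.

Lemma coefL_scaleL c f mu : coefL (scaleL c f) mu = c * coefL f mu.
Proof. by rewrite /coefL big_map mulr_sumr. Qed.

Lemma coefL_seq1 m nu : coefL [:: (m, 1)] nu = (nmon m == nu)%:R.
Proof. by rewrite /coefL big_mkcond big_seq1; case: eqP. Qed.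

Lemma phi_cat f g : phi (f ++ g) = phi f + phi g.
Proof. by rewrite /phi big_cat. Qed.

Lemma phi_scaleL c f : phi (scaleL c f) = c%:~R * phi f.
Proof. by rewrite /phi big_map mulr_sumr; apply: eq_bigr => t _; rewrite intrM mulrA. Qed.

Lemma phi_mulL f g : phi (mulL f g) = phi f * phi g.
Proof.
rewrite /phi /mulL big_allpairs_dep big_distrlr /=.
by apply: eq_bigr => t _; apply: eq_bigr => u _; rewrite big_cat /= intrM mulrACA.
Qed.

Lemma phi_coefL f (U : seq (seq nat)) : uniq U -> {subset [seq nmon t.1 | t <- f] <= U} ->
  phi f = \sum_(mu <- U) (coefL f mu)%:~R * phi_mon mu.
Proof.
move=> uU sub; rewrite /phi.
transitivity (\sum_(t <- f) \sum_(mu <- U) (if nmon t.1 == mu then t.2 else 0)%:~R * phi_mon mu).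
  apply: eq_big_seq => t tf.
  have inU : nmon t.1 \in U by apply: sub; apply/mapP; exists t.
  rewrite [RHS](bigD1_seq (nmon t.1)) //= eqxx [X in _ = _ + X]big1 ?addr0 ?phi_mon_nmon //.
  by move=> mu /negbTE; rewrite eq_sym => ->; rewrite mul0r.
rewrite exchange_big /=; apply: eq_bigr => mu _.
rewrite /coefL -mulr_suml rmorph_sum [in RHS]big_mkcond /=; congr (_ * _).
by apply: eq_bigr => t _; case: ifP.
Qed.

Lemma phi_lam_eq f g : lam_eq f g -> phi f = phi g.
Proof.
move=> Efg; set U := undup ([seq nmon t.1 | t <- f] ++ [seq nmon t.1 | t <- g]).
have uU : uniq U by apply: undup_uniq.
rewrite (@phi_coefL f U) ?(@phi_coefL g U) //.
- by apply: eq_bigr => mu _; rewrite Efg.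
- by move=> mu mi; rewrite mem_undup mem_cat mi orbT.
- by move=> mu mi; rewrite mem_undup mem_cat mi.
Qed.

Lemma lam_comb_cons pc cs : lam_comb (pc :: cs) = scaleL pc.2 (schur pc.1) ++ lam_comb cs.
Proof. by []. Qed.

Lemma coefL_lam_comb cs mu :
  coefL (lam_comb cs) mu = \sum_(pc <- cs) pc.2 * coefL (schur pc.1) mu.
Proof.
elim: cs => [|pc cs IH]; first by rewrite big_nil coefL_nil.
by rewrite lam_comb_cons coefL_cat coefL_scaleL IH big_cons.
Qed.

Lemma phi_lam_comb cs : phi (lam_comb cs) = \sum_(pc <- cs) pc.2%:~R * phi (schur pc.1).
Proof.
elim: cs => [|pc cs IH]; first by rewrite big_nil /phi big_nil.
by rewrite lam_comb_cons phi_cat phi_scaleL IH big_cons.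
Qed.

Definition in_Zx (y : Rab) := exists (k : int) (q : Rab), y = k%:~R + xZ * q.

Lemma in_Zx_int (k : int) : in_Zx k%:~R.
Proof. by exists k, 0; rewrite mulr0 addr0. Qed.

Lemma in_Zx_add y z : in_Zx y -> in_Zx z -> in_Zx (y + z).
Proof. by move=> [k1 [q1 ->]] [k2 [q2 ->]]; exists (k1 + k2), (q1 + q2); rewrite intrD; ring. Qed.

Lemma in_Zx_mul y z : in_Zx y -> in_Zx z -> in_Zx (y * z).
Proof.
move=> [k1 [q1 ->]] [k2 [q2 ->]].
by exists (k1 * k2), (k1%:~R * q2 + q1 * (k2%:~R + xZ * q2)); rewrite intrM; ring.
Qed.

Lemma in_Zx_lam_x k : in_Zx (lam_x k).
Proof.
case: k => [|k]; first by exists 1, 0; rewrite lam_x0 mulr0 addr0.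
by exists 0, (bZ ^+ k); rewrite lam_xS add0r.
Qed.

Lemma in_Zx_phi f : in_Zx (phi f).
Proof.
apply: (big_ind in_Zx); [by exists 0, 0; rewrite mulr0 addr0 | exact: in_Zx_add | move=> t _].
apply: in_Zx_mul; first exact: in_Zx_int.
apply: (big_ind in_Zx); [by exists 1, 0; rewrite mulr0 addr0 | exact: in_Zx_mul |].
by move=> k _; apply: in_Zx_lam_x.
Qed.

Definition in_phi_image (y : Rab) := exists f, phi f = y.

Lemma in_phi_image_add y z : in_phi_image y -> in_phi_image z -> in_phi_image (y + z).
Proof. by move=> [f <-] [g <-]; exists (f ++ g); rewrite phi_cat. Qed.

Lemma in_phi_image_mul y z : in_phi_image y -> in_phi_image z -> in_phi_image (y * z).
Proof. by move=> [f <-] [g <-]; exists (mulL f g); rewrite phi_mulL. Qed.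

Lemma in_phi_image_scale (c : int) y : in_phi_image y -> in_phi_image (c%:~R * y).
Proof. by move=> [f <-]; exists (scaleL c f); rewrite phi_scaleL. Qed.

Lemma in_phi_image_int (c : int) : in_phi_image c%:~R.
Proof. by exists [:: ([::], c)]; rewrite /phi big_seq1 big_nil mulr1. Qed.

Lemma in_phi_image_lam_x k : in_phi_image (lam_x k).
Proof. by exists [:: ([:: k], 1)]; rewrite /phi !big_seq1 mul1r. Qed.

Lemma in_phi_image_sum I (r : seq I) (F : I -> Rab) :
  (forall i, in_phi_image (F i)) -> in_phi_image (\sum_(i <- r) F i).
Proof.
move=> H; apply: (big_ind in_phi_image) => //; last exact: in_phi_image_add.
by exists [::]; rewrite /phi big_nil.
Qed.

(* Induction on [i] through [x a^(i+1) b^j = (x a^i b^j) x - x a^i b^(j+1)]. *)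
Lemma in_phi_image_x_monomial i j : in_phi_image (xZ * (aZ ^+ i * bZ ^+ j)).
Proof.
elim: i j => [|i IH] j; first by rewrite expr0 mul1r -lam_xS; apply: in_phi_image_lam_x.
have -> : xZ * (aZ ^+ i.+1 * bZ ^+ j) =
    xZ * (aZ ^+ i * bZ ^+ j) * lam_x 1 + (-1)%:~R * (xZ * (aZ ^+ i * bZ ^+ j.+1)).
  rewrite lam_xS !exprSr /xZ; move: (aZ ^+ i) (bZ ^+ j) => A B; ring.
apply: in_phi_image_add; last exact/in_phi_image_scale/IH.
exact/in_phi_image_mul/in_phi_image_lam_x/IH.
Qed.

Lemma phi_image y : in_phi_image y <-> in_Zx y.
Proof.
split; first by move=> [f <-]; exact: in_Zx_phi.
move=> [k [q ->]]; apply/in_phi_image_add; first exact: in_phi_image_int.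
rewrite (Rab_expansion q) mulr_sumr; apply: in_phi_image_sum => j.
rewrite mulr_sumr; apply: in_phi_image_sum => i.
by rewrite mulrCA; apply/in_phi_image_scale/in_phi_image_x_monomial.
Qed.

(** * Schur functions containing (2,2) *)

Lemma det_proportional_rows (R : comPzRingType) n (A : 'M[R]_n) i1 i2 (k : R) :
  i1 != i2 -> (forall j, A i1 j = k * A i2 j) -> \det A = 0.
Proof.
move=> ne Hrow.
pose B : 'M[R]_n := \matrix_(i, j) (if i == i1 then A i2 j else A i j).
have -> : \det A = k * \det B + 0 * \det A.
  apply: (@determinant_multilinear _ _ A B A i1).
  - by apply/rowP => j; rewrite !mxE eqxx mul0r addr0 Hrow.
  - by apply/matrixP => i j; rewrite !mxE eq_sym (negbTE (neq_lift _ _)).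
  - by [].
rewrite mul0r addr0 (@determinant_alternate _ _ B i1 i2 ne) ?mulr0 //.
by move=> j; rewrite !mxE eqxx eq_sym (negbTE ne).
Qed.

Definition jt_expansion (c : seq nat) : Lam :=
  let l := size c in
  [seq ([seq absz (jt_idx c i (s i)) | i : 'I_l <- enum 'I_l], ((-1) ^+ odd_perm s : int))
  | s : {perm 'I_l} <- enum [set: {perm 'I_l}]
  & all (fun i : 'I_l => 0 <= jt_idx c i (s i)) (enum 'I_l)].

Lemma schurE p : schur p = jt_expansion (conjp p).
Proof. by []. Qed.

Definition lam_xz (z : int) : Rab := if 0 <= z then lam_x (absz z) else 0.

Lemma phi_jt_expansion c :
  phi (jt_expansion c) = \det (\matrix_(i < size c, j < size c) lam_xz (jt_idx c i j)).
Proof.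
rewrite /phi /jt_expansion big_map big_filter big_enum_cond /=.
rewrite /determinant big_mkcond /=; apply: eq_bigr => s _; rewrite in_setT /=.
case: ifP => [/allP good | /negbT bad].
  rewrite big_map big_enum /=; congr (_ * _).
    by case: (odd_perm s); rewrite /= ?expr1 ?expr0.
  by apply: eq_bigr => i _; rewrite mxE /lam_xz good // mem_enum.
have [i _ Hi] : exists2 i, i \in enum 'I_(size c) & ~~ (0 <= jt_idx c i (s i)).
  by apply/hasP; rewrite has_predC.
by rewrite (bigD1 i) //= mxE /lam_xz (negbTE Hi) mul0r mulr0.
Qed.

Lemma count_gt_sorted (mu : seq nat) i j : sorted geq mu ->
  (j < count (fun q => i < q) mu)%N = (i < nth 0%N mu j)%N.
Proof.
elim: mu j => [|a mu IH] j /=; first by rewrite nth_nil.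
move=> Hs; have Hs' : sorted geq mu by move: Hs; case: (mu) => //= b r /andP[].
have le_a q : q \in mu -> (q <= a)%N by move/(allP (order_path_min geq_trans Hs)).
case: (ltnP i a) => ia /=; first by case: j => [|j] //=; rewrite add1n ltnS; exact: IH.
have -> : count (fun q => i < q)%N mu = 0%N.
  apply/eqP; rewrite -leqn0 leqNgt -has_count; apply/hasP => [[q /le_a qa iq]].
  by move: (leq_trans iq (leq_trans qa ia)); rewrite ltnn.
case: j => [|j] /=; rewrite addn0; first by rewrite [RHS]ltnNge ia.
apply/esym/negbTE; rewrite -leqNgt.
case: (ltnP j (size mu)) => js; last by rewrite nth_default.
exact: leq_trans (le_a _ (mem_nth _ js)) ia.
Qed.

Lemma nth_leq_head mu j : sorted geq mu -> (nth 0%N mu j <= head 0%N mu)%N.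
Proof.
case: mu => [|a mu] /=; first by rewrite nth_nil.
move=> Hs; case: j => [|j] //=.
case: (ltnP j (size mu)) => js; last by rewrite nth_default.
exact: (allP (order_path_min geq_trans Hs)) _ (mem_nth _ js).
Qed.

Lemma size_conjp mu : size (conjp mu) = head 0%N mu.
Proof. by rewrite /conjp size_map size_iota. Qed.

Lemma nth_conjp mu i : (i < head 0%N mu)%N ->
  nth 0%N (conjp mu) i = count (fun q => i < q)%N mu.
Proof. by move=> h; rewrite /conjp (nth_map 0%N) ?size_iota // nth_iota. Qed.

Lemma count_lt_iota a h : (a <= h)%N -> count (fun i => i < a)%N (iota 0 h) = a.
Proof.
move=> ah; rewrite -(subnKC ah) iotaD count_cat.
rewrite (eq_in_count (a2 := predT)); last by move=> x; rewrite mem_iota => /andP[_].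
rewrite count_predT size_iota add0n (eq_in_count (a2 := pred0)) ?count_pred0 ?addn0 //.
by move=> x; rewrite mem_iota => /andP[h1 _] /=; rewrite ltnNge h1.
Qed.

Lemma conjpK mu : is_partition mu -> conjp (conjp mu) = mu.
Proof.
case/andP => Hs Hp.
have hc : head 0%N (conjp mu) = size mu.
  case: mu Hs Hp => [|a mu] // Hs /andP[a0 Hp].
  rewrite -nth0 nth_conjp //= a0 add1n; congr (_.+1).
  by apply/eqP; rewrite -all_count.
rewrite {1}/conjp hc -[in RHS](mkseq_nth 0%N mu) /mkseq; apply/eq_in_map => j.
rewrite mem_iota add0n => js; rewrite /conjp count_map.
rewrite (eq_in_count (a2 := fun i => (i < nth 0%N mu j)%N)).
  exact/count_lt_iota/nth_leq_head.
by move=> i _; exact: count_gt_sorted.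
Qed.

Lemma conjp_partition mu : is_partition mu -> is_partition (conjp mu).
Proof.
case/andP => Hs Hp; apply/andP; split.
  rewrite /conjp sorted_map; apply: (@sub_sorted _ ltn); last exact: iota_ltn_sorted.
  by move=> x y /= xy; apply: sub_count => q /=; apply: ltn_trans.
apply/allP => c /mapP [i]; rewrite mem_iota add0n => ih ->.
by case: mu Hs Hp ih => [|a mu] //= _ _ ia; rewrite ia add1n.
Qed.

Lemma conjp_contains22 mu :
  is_partition mu -> (2 <= nth 0%N mu 1)%N -> contains22 (conjp mu).
Proof.
case/andP => Hs _ h2.
have hh : (1 < head 0%N mu)%N by apply: leq_trans h2 (nth_leq_head _ Hs).
rewrite /contains22 !nth_conjp ?(ltnW hh) //.
by rewrite (count_gt_sorted 0 1 Hs) (count_gt_sorted 1 1 Hs) h2 andbT (ltnW h2).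
Qed.

Lemma contains22_conjp p : is_partition p -> contains22 p ->
  [/\ (1 < size (conjp p))%N, (2 <= nth 0%N (conjp p) 1)%N
    & (nth 0%N (conjp p) 1 <= nth 0%N (conjp p) 0)%N].
Proof.
case/andP=> Hs _ /andP[h0 h1]; have hh : (1 < head 0%N p)%N by case: p h0 {Hs h1}.
rewrite size_conjp !nth_conjp ?(ltnW hh) //; split => //.
  by rewrite -(count_gt_sorted 1 1 Hs) in h1.
by apply: sub_count => q /=; exact: ltnW.
Qed.

Lemma lam_xz_shift (z : int) (d : nat) : 0 < z -> lam_xz (z + d%:Z) = bZ ^+ d * lam_xz z.
Proof.
case: z => [[|n]|] // _; rewrite /lam_xz -PoszD !le0z_nat !absz_nat addSn !lam_xS.
by rewrite exprD mulrA mulrC.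
Qed.

(* Rows 0 and 1 differ by the factor [b^(c_0 - c_1 + 1)], where [c] is the conjugate of [p]. *)
Lemma phi_schur_contains22 p : is_partition p -> contains22 p -> phi (schur p) = 0.
Proof.
move=> Hp H22; rewrite schurE phi_jt_expansion.
have [Hsize H1 H10] := contains22_conjp Hp H22.
apply: (@det_proportional_rows _ _ _ (Ordinal (ltnW Hsize)) (Ordinal Hsize)
  (bZ ^+ (nth 0%N (conjp p) 0 - nth 0%N (conjp p) 1).+1)) => // j.
rewrite !mxE -lam_xz_shift; last by rewrite /jt_idx /=; lia.
by congr lam_xz; rewrite /jt_idx /=; lia.
Qed.

Lemma phi_in_I22 f : in_I22 f -> phi f = 0.
Proof.
move=> [cs [Hcs Heq]]; rewrite (phi_lam_eq Heq) phi_lam_comb big1_seq // => pc /andP[_ pcin].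
by have /andP[Hp H22] := allP Hcs pc pcin; rewrite phi_schur_contains22 // mulr0.
Qed.

(** * Independence of the hooks *)

Definition hookp (mu : seq nat) := is_partition mu && (nth 0%N mu 1 <= 1)%N.

Definition hook_list (H : Lam) : bool := all (fun t => hookp (nmon t.1)) H.

Lemma hook_shape a r : hookp (a :: r) -> r = nseq (size r) 1%N /\ (0 < a)%N.
Proof.
case/andP => /andP[Hs /= /andP[a0 Hr]] H1; split => //.
apply/all_pred1P/allP => k kr.
move: H1; case: r Hs Hr kr => [|b r'] //= Hs /andP[b0 Hr'] kr b1.
have kb : (k <= b)%N.
  move: kr; rewrite inE => /orP[/eqP -> //|kr'].
  by case/andP: Hs => _ /(order_path_min geq_trans) /allP; apply.
have k0 : (0 < k)%N by move: kr; rewrite inE => /orP[/eqP -> //|/(allP Hr')].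
by apply/eqP/anti_leq; rewrite k0 (leq_trans kb b1).
Qed.

Lemma phi_mon_hook mu : hookp mu -> phi_mon mu = xZ ^+ size mu * bZ ^+ (head 0%N mu).-1.
Proof.
case: mu => [|a r]; first by rewrite /phi_mon big_nil !expr0 mulr1.
case/hook_shape => -> a0; rewrite /phi_mon big_cons /= size_nseq.
case: a a0 => [|a] // _; rewrite lam_xS.
have -> : \prod_(j <- nseq (size r) 1%N) lam_x j = xZ ^+ size r.
  elim: (size r) => [|n IH]; first by rewrite big_nil.
  by rewrite /= big_cons IH lam_xS expr0 mulr1 exprS.
by rewrite exprS mulrAC.
Qed.

Lemma hook_eq mu nu : hookp mu -> hookp nu ->
  size mu = size nu -> (head 0%N mu).-1 = (head 0%N nu).-1 -> mu = nu.
Proof.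
case: mu => [|a r]; case: nu => [|b r'] //= ha hb [es] eh.
have [ra a0] := hook_shape ha; have [rb b0] := hook_shape hb.
by rewrite -(prednK a0) -(prednK b0) eh ra rb es.
Qed.

(* The ring endomorphism [a |-> a - b], [b |-> b] of [Z[a,b]]. *)
Definition shear : {rmorphism Rab -> Rab} :=
  horner_eval bZ \o map_poly (horner_eval (aZ - bZ) \o map_poly (intr : int -> Rab)).

Lemma shear_x : shear xZ = aZ.
Proof.
rewrite /shear /xZ /aZ /bZ rmorphD /= map_polyC map_polyX /horner_eval hornerC hornerX /=.
by rewrite map_polyX /horner_eval hornerX subrK.
Qed.

Lemma shear_b : shear bZ = bZ.
Proof. by rewrite /shear /= /bZ map_polyX /horner_eval hornerX. Qed.

Lemma coef_monomial_ab s t S T :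
  ((aZ ^+ s * bZ ^+ t)`_T)`_S = ((s == S) && (t == T))%:R :> int.
Proof.
rewrite /bZ coefMXn /aZ -rmorphXn coefC.
case: ltnP => h.
  by rewrite coef0 (_ : (t == T) = false) ?andbF // eq_sym; apply/negbTE; rewrite neq_ltn h.
rewrite subn_eq0 [t == T]eqn_leq h /=.
by case: (T <= t)%N; [rewrite coefXn andbT eq_sym | rewrite andbF coef0].
Qed.

Lemma coef_intr_mul (k : int) (p : Rab) T S : ((k%:~R * p)`_T)`_S = k * (p`_T)`_S.
Proof. by rewrite (mulrzl p k) coefMrz coefMrz -mulrzl intz. Qed.

Lemma coefL_hooks_eq0 (H : Lam) : hook_list H ->
  phi H = 0 -> forall mu, coefL H mu = 0.
Proof.
move=> Hh H0.
have shear_phi : shear (phi H) = \sum_(t <- H) t.2%:~R *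
     (aZ ^+ size (nmon t.1) * bZ ^+ (head 0%N (nmon t.1)).-1).
  rewrite phiE rmorph_sum; apply: eq_big_seq => t tH.
  rewrite rmorphM rmorph_int -phi_mon_nmon phi_mon_hook; last exact: (allP Hh).
  by rewrite rmorphM !rmorphXn shear_x shear_b.
have sum_eq0 S T : \sum_(t <- H) t.2 *
    ((size (nmon t.1) == S) && ((head 0%N (nmon t.1)).-1 == T))%:R = 0.
  have := congr1 (fun p : Rab => (p`_T)`_S) shear_phi.
  rewrite H0 rmorph0 !coef0 /= => E0; rewrite [RHS]E0.
  by rewrite !coef_sum; apply: eq_bigr => t _; rewrite coef_intr_mul coef_monomial_ab mulrC.
move=> mu; rewrite /coefL.
case hm : (hookp mu); last first.
  by apply: big1_seq => t /andP[/eqP e tH]; move: (allP Hh t tH); rewrite e hm.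
rewrite -[RHS](sum_eq0 (size mu) (head 0%N mu).-1) big_mkcond /=; apply: eq_big_seq => t tH.
case: eqP => [-> | ne]; first by rewrite !eqxx mulr1.
case: andP => [[/eqP es /eqP eh] | _]; last by rewrite mulr0.
by case: ne; apply: hook_eq (allP Hh t tH) hm es eh.
Qed.

(** * Triangularity of the Jacobi-Trudi expansion *)

Section Rearrangement.

Variables (n : nat) (d : 'I_n -> int).

Definition rsum (s : 'S_n) : int := \sum_i d i * (s i : nat)%:Z.

Lemma rsum_tperm (s : 'S_n) (i0 j : 'I_n) : s j = i0 -> i0 != j ->
  rsum s = rsum (tperm i0 j * s)%g + (d i0 - d j) * ((s i0 : nat)%:Z - (i0 : nat)%:Z).
Proof.
move=> sj ne; rewrite /rsum -[LHS](subrK (\sum_i d i * ((tperm i0 j * s)%g i : nat)%:Z)) addrC.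
congr (_ + _); rewrite -sumrB (bigD1 i0) //= (bigD1 j) /=; last by rewrite eq_sym.
rewrite big1 ?addr0; last by move=> x /andP[x1 x2]; rewrite permM tpermD 1?eq_sym // subrr.
by rewrite !permM tpermL tpermR sj -!mulrBr mulrBl -mulrN opprB.
Qed.

Hypothesis d_decr : forall i j : 'I_n, (i < j)%N -> d j < d i.

(* Swap the least moved point [i0] back into place: the moved set shrinks and, as
   [i0 < s i0] and [i0 < s^-1 i0], the weighted sum strictly decreases. *)
Lemma rsum_descent (s : 'S_n) : s != 1%g ->
  exists s' : 'S_n, (#|[set i | s' i != i]| < #|[set i | s i != i]|)%N /\ rsum s' < rsum s.
Proof.
move=> s_neq1.
have [i Hi] : exists i, s i != i.
  apply/existsP; apply: contraNT s_neq1; rewrite negb_exists => /forallP fix_s.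
  by apply/eqP/permP => x; rewrite perm1; apply/eqP/negPn/fix_s.
case: (@arg_minnP _ i (fun i => s i != i) (fun i => nat_of_ord i) Hi) => i0 Hi0 Hmin.
set j := (s^-1)%g i0; have sj : s j = i0 by rewrite permKV.
have j_neq_i0 : j != i0 by rewrite -(inj_eq (@perm_inj _ s)) sj eq_sym.
have lt_i0 (y : 'I_n) : s y != y -> y != i0 -> (i0 < y)%N.
  by move=> /Hmin le ne; rewrite ltn_neqAle le andbT; apply: contra ne => /eqP/val_inj ->.
have i0_lt_si0 : (i0 < s i0)%N.
  by apply: lt_i0; rewrite ?(inj_eq perm_inj).
have i0_lt_j : (i0 < j)%N by apply: lt_i0; rewrite // sj eq_sym.
exists (tperm i0 j * s)%g; split.
  apply: proper_card; apply/properP; split.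
    apply/subsetP => x; rewrite !inE permM.
    case: (tpermP i0 j x) => [-> | -> | x1 x2]; rewrite ?sj ?eqxx //.
    by move=> _; rewrite eq_sym.
  by exists i0; rewrite !inE // permM tpermL sj eqxx.
rewrite (rsum_tperm sj) 1?eq_sym // ltrDl; apply: mulr_gt0.
  by rewrite subr_gt0 d_decr.
by rewrite subr_gt0 ltz_nat.
Qed.

Lemma rsum_gt_id (s : 'S_n) : s != 1%g -> rsum 1%g < rsum s.
Proof.
move: {2}#|_| (leqnn #|[set i | s i != i]|) => k.
elim: k s => [|k IH] s hk s_neq1; have [s' [lt_s' rsum_lt]] := rsum_descent s_neq1.
  by move: (leq_trans lt_s' hk).
have [s'1 | s'_neq1] := eqVneq s' 1%g; first by rewrite -s'1.
exact: lt_trans (IH s' (leq_trans lt_s' hk) s'_neq1) rsum_lt.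
Qed.

End Rearrangement.

Definition jt_shift (mu : seq nat) (i : 'I_(size mu)) : int := (nth 0%N mu i)%:Z - (i : nat)%:Z.

Definition jt_mon (mu : seq nat) (s : 'S_(size mu)) : seq nat :=
  [seq absz (jt_idx mu i (s i)) | i : 'I_(size mu) <- enum 'I_(size mu)].

Definition jt_nonneg (mu : seq nat) (s : 'S_(size mu)) : bool :=
  all (fun i : 'I_(size mu) => 0 <= jt_idx mu i (s i)) (enum 'I_(size mu)).

Definition jt_tail (mu : seq nat) : Lam :=
  [seq (jt_mon s, ((-1) ^+ odd_perm s : int))
  | s : {perm 'I_(size mu)} <- enum [set: {perm 'I_(size mu)}] & jt_nonneg s && (s != 1%g)].

Definition sqsum (m : seq nat) : nat := sumn [seq (k * k)%N | k <- m].

Lemma jt_idxE mu (i : 'I_(size mu)) (j : nat) : jt_idx mu i j = jt_shift i + j%:Z.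
Proof. by []. Qed.

Lemma jt_mon1 mu : jt_mon (1%g : 'S_(size mu)) = mu.
Proof.
rewrite /jt_mon (eq_map (g := fun i : 'I_(size mu) => nth 0%N mu i)); last first.
  by move=> i; rewrite perm1 jt_idxE /jt_shift subrK absz_nat.
by rewrite (map_comp (nth 0%N mu) val) val_enum_ord -/(mkseq _ _) mkseq_nth.
Qed.

Lemma jt_nonneg1 mu : jt_nonneg (1%g : 'S_(size mu)).
Proof. by apply/allP => i _; rewrite perm1 jt_idxE /jt_shift subrK. Qed.

Lemma coefL_jt_expansion mu nu : is_partition mu ->
  coefL (jt_expansion mu) nu = (mu == nu)%:R + coefL (jt_tail mu) nu.
Proof.
move=> Hp; rewrite /coefL /jt_expansion /jt_tail !big_map.
rewrite [LHS]big_filter_cond [in RHS]big_filter_cond !big_enum_cond /=.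
have m1 := jt_mon1 mu; have g1 := jt_nonneg1 mu; rewrite /jt_mon in m1; rewrite /jt_nonneg in g1.
rewrite big_mkcond [in RHS]big_mkcond /= (bigD1 1%g) //= [in RHS](bigD1 1%g) //=.
rewrite g1 m1 (nmon_id Hp) /= odd_perm1 expr0 !in_setT /= eqxx andbF add0r.
by congr (_ + _); [case: eqP | apply: eq_bigr => s ne; rewrite ne andbT].
Qed.

Lemma sumn_enum_ord l (f : 'I_l -> nat) :
  (sumn [seq f i | i <- enum 'I_l])%:Z = \sum_i (f i)%:Z.
Proof. by rewrite sumnE big_map big_enum /=; apply: (big_morph Posz PoszD). Qed.

Lemma sum_perm (V : nmodType) l (s : 'S_l) (F : 'I_l -> V) : \sum_i F (s i) = \sum_i F i.
Proof. by rewrite [RHS](reindex_inj (@perm_inj _ s)). Qed.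

Lemma jt_mon_entry mu (s : 'S_(size mu)) (i : 'I_(size mu)) : jt_nonneg s ->
  (absz (jt_idx mu i (s i)))%:Z = jt_shift i + (s i : nat)%:Z.
Proof. by move=> /allP nn; rewrite gez0_abs // nn // mem_enum. Qed.

Lemma sumn_jt_mon mu (s : 'S_(size mu)) : jt_nonneg s -> sumn (jt_mon s) = sumn mu.
Proof.
move=> nn; apply/eqP; rewrite -eqz_nat -{2}(jt_mon1 mu) /jt_mon !sumn_enum_ord.
under eq_bigr do rewrite jt_mon_entry //.
under [X in _ == X]eq_bigr do rewrite jt_mon_entry ?jt_nonneg1 // perm1.
by rewrite !big_split /= (sum_perm s (fun i => (i : nat)%:Z)).
Qed.

Lemma sqsum_jt_mon mu (s : 'S_(size mu)) : jt_nonneg s ->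
  (sqsum (jt_mon s))%:Z = \sum_(i : 'I_(size mu)) jt_shift i ^+ 2
     + rsum (@jt_shift mu) s *+ 2 + \sum_(i : 'I_(size mu)) (i : nat)%:Z ^+ 2.
Proof.
move=> nn; rewrite /sqsum /jt_mon -map_comp sumn_enum_ord.
under eq_bigr do rewrite /= PoszM jt_mon_entry // -expr2 sqrrD.
by rewrite !big_split /= mulr2n (sum_perm s (fun i => (i : nat)%:Z ^+ 2)).
Qed.

Lemma jt_shift_decr mu : is_partition mu ->
  forall i j : 'I_(size mu), (i < j)%N -> jt_shift j < jt_shift i.
Proof.
case/andP => Hs _ i j ij; rewrite /jt_shift; apply: ler_ltB; last by rewrite ltz_nat.
rewrite lez_nat; have := sorted_leq_nth geq_trans (fun x => leqnn x) 0%N Hs.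
by move=> /(_ i j); rewrite !inE !ltn_ord => /(_ isT isT (ltnW ij)).
Qed.

Lemma sqsum_jt_mon_gt mu (s : 'S_(size mu)) : is_partition mu -> jt_nonneg s -> s != 1%g ->
  (sqsum mu < sqsum (jt_mon s))%N.
Proof.
move=> Hp nn ne; rewrite -ltz_nat -{1}(jt_mon1 mu) !sqsum_jt_mon ?jt_nonneg1 //.
by rewrite ltrD2r ltrD2l ltr_pMn2r // rsum_gt_id //; apply: jt_shift_decr.
Qed.

(** * Reduction to hooks and the kernel *)

Lemma sumn_nmon m : sumn (nmon m) = sumn m.
Proof. by rewrite (perm_sumn (perm_nmon m)); elim: m => [|[|k] m IH] //=; rewrite IH. Qed.

Lemma sqsum_nmon m : sqsum (nmon m) = sqsum m.
Proof.
rewrite /sqsum (perm_sumn (perm_map _ (perm_nmon m))).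
by elim: m => [|[|k] m IH] //=; rewrite IH.
Qed.

Lemma sqsum_leq m : (sqsum m <= sumn m ^ 2)%N.
Proof.
elim: m => [|k m IH] //=; rewrite /sqsum /= -/(sqsum _) sqrnD mulnn -addnA leq_add2l.
exact: leq_trans IH (leq_addr _ _).
Qed.

Definition gap (m : seq nat) : nat := (sumn m ^ 2 - sqsum m)%N.

Lemma gap_jt_tail mu t : is_partition mu -> t \in jt_tail mu -> (gap t.1 < gap mu)%N.
Proof.
move=> Hp /mapP [s]; rewrite mem_filter => /andP[/andP[nn ne] _] -> /=.
have lt := sqsum_jt_mon_gt Hp nn ne.
rewrite /gap sumn_jt_mon // ltn_sub2l //.
by apply: leq_trans lt _; rewrite -(sumn_jt_mon nn) sqsum_leq.
Qed.

Lemma e_mon_jacobi_trudi mu : is_partition mu ->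
  lam_eq [:: (mu, 1)] (lam_comb [:: (conjp mu, 1)] ++ scaleL (-1) (jt_tail mu)).
Proof.
move=> Hp nu; rewrite coefL_seq1 nmon_id // coefL_cat coefL_lam_comb big_seq1 /= mul1r.
by rewrite schurE conjpK // coefL_jt_expansion // coefL_scaleL mulN1r addrK.
Qed.

Definition I22_comb (cs : seq (seq nat * int)) : bool :=
  all (fun pc => is_partition pc.1 && contains22 pc.1) cs.

Definition hook_reducible (f : Lam) := exists cs H,
  [/\ I22_comb cs, hook_list H & lam_eq f (lam_comb cs ++ H)].

Lemma hook_reducible_nil : hook_reducible [::].
Proof. by exists [::], [::]; split => // mu. Qed.

Lemma hook_reducible_I22 cs : I22_comb cs -> hook_reducible (lam_comb cs).
Proof. by exists cs, [::]; split => // mu; rewrite cats0. Qed.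

Lemma hook_reducible_hooks H : hook_list H -> hook_reducible H.
Proof. by exists [::], H; split. Qed.

Lemma hook_reducible_lam_eq f g : lam_eq f g -> hook_reducible g -> hook_reducible f.
Proof. by move=> Efg [cs [H [? ? Eg]]]; exists cs, H; split => // mu; rewrite Efg Eg. Qed.

Lemma hook_reducible_cat f g :
  hook_reducible f -> hook_reducible g -> hook_reducible (f ++ g).
Proof.
move=> [cs1 [H1 [g1 h1 e1]]] [cs2 [H2 [g2 h2 e2]]].
exists (cs1 ++ cs2), (H1 ++ H2); split; first by rewrite /I22_comb all_cat; apply/andP.
  by rewrite /hook_list all_cat; apply/andP.
move=> mu; rewrite !coefL_cat e1 e2 !coefL_cat !coefL_lam_comb big_cat /=.
by rewrite -!coefL_lam_comb addrACA.
Qed.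

Lemma hook_reducible_scaleL c f : hook_reducible f -> hook_reducible (scaleL c f).
Proof.
move=> [cs [H [g h e]]]; exists [seq (pc.1, c * pc.2) | pc <- cs], (scaleL c H); split.
- by rewrite /I22_comb all_map; apply: sub_all g => pc.
- by rewrite /hook_list /scaleL all_map; apply: sub_all h => t.
move=> mu; rewrite coefL_scaleL e !coefL_cat coefL_scaleL !coefL_lam_comb big_map mulrDr.
by rewrite mulr_sumr; congr (_ + _); apply: eq_bigr => pc _; rewrite mulrA.
Qed.

Lemma hook_reducible_terms f :
  (forall t, t \in f -> hook_reducible [:: (t.1, 1)]) -> hook_reducible f.
Proof.
elim: f => [|t f IH] Hf; first exact: hook_reducible_nil.
have -> : t :: f = scaleL t.2 [:: (t.1, 1)] ++ f by rewrite /scaleL /= mulr1; case: t {Hf}.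
apply: hook_reducible_cat; first by apply/hook_reducible_scaleL/Hf; rewrite inE eqxx.
by apply: IH => u uf; apply: Hf; rewrite inE uf orbT.
Qed.

(* Induction on [gap]: a non-hook partition [mu] has [contains22 (conjp mu)], so
   Jacobi-Trudi rewrites [e_mu] modulo [I_(2,2)] into monomials of smaller gap. *)
Lemma hook_reducible_mon m : hook_reducible [:: (m, 1)].
Proof.
have [k] := ubnP (gap m); elim: k m => // k IH m /ltnSE gap_m.
pose mu := nmon m; have Hp : is_partition mu := nmon_partition m.
apply: (@hook_reducible_lam_eq _ [:: (mu, 1)]); first by move=> nu; rewrite !coefL_seq1 nmonK.
have [hook_mu | not_hook] := boolP (hookp mu).
  by apply: hook_reducible_hooks; rewrite /hook_list /= nmonK hook_mu.
have mu22 : contains22 (conjp mu).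
  by apply: conjp_contains22; rewrite // leqNgt; move: not_hook; rewrite /hookp Hp.
apply: hook_reducible_lam_eq (e_mon_jacobi_trudi Hp) _.
apply: hook_reducible_cat.
  by apply: hook_reducible_I22; rewrite /I22_comb /= mu22 andbT conjp_partition.
apply/hook_reducible_scaleL/hook_reducible_terms => t /(gap_jt_tail Hp) lt_gap.
by apply: IH; apply: leq_trans lt_gap _; rewrite /mu /gap sumn_nmon sqsum_nmon.
Qed.

Lemma hook_reducible_all f : hook_reducible f.
Proof. by apply: hook_reducible_terms => t _; apply: hook_reducible_mon. Qed.

Lemma phi_kernel f : phi f = 0 <-> in_I22 f.
Proof.
split=> [phi_f0 | /phi_in_I22 //].
have [cs [H [Hcs hooks Ef]]] := hook_reducible_all f.
have phi_cs0 : phi (lam_comb cs) = 0 by apply: phi_in_I22; exists cs.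
have phi_H0 : phi H = 0 by rewrite -phi_f0 (phi_lam_eq Ef) phi_cat phi_cs0 add0r.
by exists cs; split => // mu; rewrite Ef coefL_cat (coefL_hooks_eq0 hooks phi_H0) addr0.
Qed.

Theorem corollary4 :
  (forall f : Lam, phi f = 0 <-> in_I22 f)
  /\ (forall y : Rab, (exists f : Lam, phi f = y) <->
        exists (k : int) (q : Rab), y = k%:~R + xZ * q)
  /\ (forall n : nat, lamR n.+1 xZ = xZ * bZ ^+ n).
Proof. by split; [exact: phi_kernel | split; [exact: phi_image | exact: lam_xS]]. Qed.
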